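(* Let $n,m$ be positive integers and let $A,B$ be positive real numbers. On the Siegel–Jacobi space $\mathbb{H}_{n,m}=\mathbb{H}_n\times\mathbb{C}^{(m,n)}$, with coordinates $(Z,W)$, $Z=X+iY$, $W=U+iV$ ($X,Y,U,V$ real), the symmetric tensor \begin{align*} ds_{n,m;A,B}^2&= A\,\sigma\big(Y^{-1}dZ\,Y^{-1}d\overline{Z}\big)\\ &\quad+B\,\Big\{\sigma\big(Y^{-1}\,{}^tV\,V\,Y^{-1}dZ\,Y^{-1}d\overline{Z}\big)+\sigma\big(Y^{-1}\,{}^t(dW)\,d\overline{W}\big)\\ &\qquad\quad-\sigma\big(V\,Y^{-1}dZ\,Y^{-1}\,{}^t(d\overline{W})\big)-\sigma\big(V\,Y^{-1}d\overline{Z}\,Y^{-1}\,{}^t(dW)\big)\Big\} \end{align*} is a Riemannian metric on $\mathbb{H}_{n,m}$ which is invariant under the natural action of the Jacobi group $G^J$ on $\mathbb{H}_{n,m}$.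
   Context: $\mathbb{H}_n=\{Z\in\mathbb{C}^{(n,n)}: Z={}^tZ,\ \operatorname{Im}Z>0\}$ is the Siegel upper half space; $\mathbb{C}^{(m,n)}$ denotes complex $m\times n$ matrices; ${}^tM$ is the transpose and $\sigma(M)$ the trace of a square matrix. $dZ=(dz_{\mu\nu})$, $d\overline Z=(d\overline z_{\mu\nu})$, $dW=(dw_{kl})$, $d\overline W=(d\overline w_{kl})$ are matrices of differentials. $Sp(n,\mathbb{R})=\{M\in\mathbb{R}^{(2n,2n)}: {}^tMJ_nM=J_n\}$ with $J_n=\begin{pmatrix}0&E_n\\-E_n&0\end{pmatrix}$, $E_n$ the identity. The Heisenberg group $H^{(n,m)}_{\mathbb{R}}=\{(\lambda,\mu;\kappa):\lambda,\mu\in\mathbb{R}^{(m,n)},\kappa\in\mathbb{R}^{(m,m)},\ \kappa+\mu\,{}^t\lambda\text{ symmetric}\}$ has product $(\lambda,\mu;\kappa)\circ(\lambda',\mu';\kappa')=(\lambda+\lambda',\mu+\mu';\kappa+\kappa'+\lambda\,{}^t\mu'-\mu\,{}^t\lambda')$. The Jacobi group is $G^J=Sp(n,\mathbb{R})\ltimes H^{(n,m)}_{\mathbb{R}}$ with product $(M,(\lambda,\mu;\kappa))\cdot(M',(\lambda',\mu';\kappa'))=(MM',(\tilde\lambda+\lambda',\tilde\mu+\mu';\kappa+\kappa'+\tilde\lambda\,{}^t\mu'-\tilde\mu\,{}^t\lambda'))$ where $(\tilde\lambda,\tilde\mu)=(\lambda,\mu)M'$. Its natural action on $\mathbb{H}_{n,m}$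 is $(M,(\lambda,\mu;\kappa))\cdot(Z,W)=\big((AZ+B)(CZ+D)^{-1},\,(W+\lambda Z+\mu)(CZ+D)^{-1}\big)$ for $M=\begin{pmatrix}A&B\\C&D\end{pmatrix}$ (here $A,B,C,D$ are the $n\times n$ blocks of $M$, unrelated to the positive constants $A,B$ of the metric). *)

From HB Require Import structures.
From mathcomp Require Import all_boot all_order all_algebra.
From mathcomp Require Import all_classical all_reals all_analysis.
From mathcomp Require Import complex.
Set Implicit Arguments. Unset Strict Implicit. Unset Printing Implicit Defensive.
Import Order.TTheory GRing.Theory Num.Theory.
Import numFieldNormedType.Exports.
Local Open Scope classical_set_scope.
Local Open Scope ring_scope.

Section SiegelJacobi.
Variable R : realType.
Local Notation C := (R[i]).

Definition cmx (p q : nat) (M : 'M[R]_(p, q)) : 'M[C]_(p, q) :=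
  map_mx (fun x : R => (x%:C)%C) M.
Definition Remx (p q : nat) (M : 'M[C]_(p, q)) : 'M[R]_(p, q) := map_mx (@complex.Re R) M.
Definition Immx (p q : nat) (M : 'M[C]_(p, q)) : 'M[R]_(p, q) := map_mx (@complex.Im R) M.
Definition conjmx (p q : nat) (M : 'M[C]_(p, q)) : 'M[C]_(p, q) :=
  map_mx (fun z : C => (z ^*)%C) M.

Definition posdef (n : nat) (Y : 'M[R]_n) : Prop :=
  Y^T = Y /\ forall x : 'cV[R]_n, x != 0 -> 0 < (x^T *m Y *m x) 0 0.

Definition in_Hn (n : nat) (Z : 'M[C]_n) : Prop := Z^T = Z /\ posdef (Immx Z).

Definition in_Hnm (n m : nat) (Z : 'M[C]_n) (W : 'M[C]_(m, n)) : Prop := in_Hn Z.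

(* The symmetric tensor ds^2_{n,m;A,B} evaluated (as a quadratic form) on the
   real tangent vector (dZ, dW) at the point (Z, W); dZbar, dWbar are the
   complex conjugates of dZ, dW. *)
Definition ds2 (n m : nat) (A B : R) (Z : 'M[C]_n) (W : 'M[C]_(m, n))
    (dZ : 'M[C]_n) (dW : 'M[C]_(m, n)) : C :=
  let Yi := invmx (cmx (Immx Z)) in
  let V := cmx (Immx W) in
  let dZb := conjmx dZ in
  let dWb := conjmx dW in
  (A%:C)%C * \tr (Yi *m dZ *m Yi *m dZb)
  + (B%:C)%C * ( \tr (Yi *m V^T *m V *m Yi *m dZ *m Yi *m dZb)
              + \tr (Yi *m dW^T *m dWb)
              - \tr (V *m Yi *m dZ *m Yi *m dWb^T)
              - \tr (V *m Yi *m dZb *m Yi *m dW^T)).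

(* Riemannian: on every real tangent vector (dZ symmetric, dW arbitrary) the
   quadratic form is real, and it is positive on nonzero tangent vectors. *)
Definition is_riemannian_metric (n m : nat)
    (g : 'M[C]_n -> 'M[C]_(m, n) -> 'M[C]_n -> 'M[C]_(m, n) -> C) : Prop :=
  forall Z W, in_Hnm Z W ->
  forall dZ dW, dZ^T = dZ ->
    @complex.Im R (g Z W dZ dW) = 0 /\
    ((dZ, dW) != (0, 0) -> 0 < @complex.Re R (g Z W dZ dW)).

Definition Jmx (n : nat) : 'M[R]_(n + n) := block_mx 0 1%:M (- 1%:M) 0.
Definition in_Sp (n : nat) (M : 'M[R]_(n + n)) : Prop := M^T *m Jmx n *m M = Jmx n.

Definition in_GJ (n m : nat) (M : 'M[R]_(n + n)) (la mu : 'M[R]_(m, n))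
    (ka : 'M[R]_m) : Prop :=
  in_Sp M /\ (ka + mu *m la^T)^T = ka + mu *m la^T.

Definition actZ (n : nat) (M : 'M[R]_(n + n)) (Z : 'M[C]_n) : 'M[C]_n :=
  (cmx (ulsubmx M) *m Z + cmx (ursubmx M))
    *m invmx (cmx (dlsubmx M) *m Z + cmx (drsubmx M)).
Definition actW (n m : nat) (M : 'M[R]_(n + n)) (la mu : 'M[R]_(m, n))
    (Z : 'M[C]_n) (W : 'M[C]_(m, n)) : 'M[C]_(m, n) :=
  (W + cmx la *m Z + cmx mu)
    *m invmx (cmx (dlsubmx M) *m Z + cmx (drsubmx M)).

Definition cvg0C (f : R -> C) (l : C) : Prop :=
  (@complex.Re R (f t) @[t --> (0 : R)^'] --> (@complex.Re R l : R)) /\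
  (@complex.Im R (f t) @[t --> (0 : R)^'] --> (@complex.Im R l : R)).

Definition mx_deriv0 (p q : nat) (c : R -> 'M[C]_(p, q)) (D : 'M[C]_(p, q)) : Prop :=
  forall i j, cvg0C (fun t => (c t i j - c 0 i j) / (t%:C)%C) (D i j).

(* The differential of the action at
   (Z, W) applied to (dZ, dW) is the derivative at t = 0 of
   t |-> g.(Z + t dZ, W + t dW). *)
Definition GJ_invariant (n m : nat)
    (g : 'M[C]_n -> 'M[C]_(m, n) -> 'M[C]_n -> 'M[C]_(m, n) -> C) : Prop :=
  forall (M : 'M[R]_(n + n)) (la mu : 'M[R]_(m, n)) (ka : 'M[R]_m),
  in_GJ M la mu ka ->
  forall Z W, in_Hnm Z W ->
  forall dZ dW, dZ^T = dZ ->
  forall dZ' dW',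
    mx_deriv0 (fun t : R => actZ M (Z + (t%:C)%C *: dZ)) dZ' ->
    mx_deriv0 (fun t : R => actW M la mu (Z + (t%:C)%C *: dZ) (W + (t%:C)%C *: dW)) dW' ->
    g (actZ M Z) (actW M la mu Z W) dZ' dW' = g Z W dZ dW.

End SiegelJacobi.

(* Write Y = Im Z, V = Im W and O = dW - V Y^-1 dZ. Completing the square in the
   B-part turns ds^2 into A tr(Y^-1 dZ Y^-1 conj(dZ)) + B tr(Y^-1 O^T conj(O)).
   Factoring Y^-1 = N^H N puts both traces in the form tr(K K^H), which is real,
   nonnegative, and positive unless K = 0.
   For g = (M, (lambda, mu; kappa)) put P = C Z + D. The symplectic relations give
   P^T Q = Q^T P and P^H Q - Q^H P = 2i Y for Q = A Z + B, hence P is invertible,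
   P^H Y' P = Y, P^T dZ' P = dZ and O' P = O for the data (Y', dZ', O') at g.(Z, W);
   both traces are unchanged under these substitutions by cyclicity of the trace.
   The differentials come from d/dt (X + t X')(P + t K)^-1 = (X' - X P^-1 K) P^-1
   at t = 0. *)

From Pilot Require Import Defs.
From HB Require Import structures.
From mathcomp Require Import all_boot all_order all_algebra.
From mathcomp Require Import all_classical all_reals all_analysis.
From mathcomp Require Import complex ring.
Set Implicit Arguments. Unset Strict Implicit. Unset Printing Implicit Defensive.
Import Order.TTheory GRing.Theory Num.Theory.
Import numFieldNormedType.Exports.
Local Open Scope ring_scope.

(* Plain [conjmx] would resolve to the homonymous operation of mxred. *)
Local Notation mxconj := (@Defs.conjmx _ _ _).
Local Notation i2 := (2%:R * 'i)%C.

Lemma mulmx1_invmx (K : comUnitRingType) n (A B : 'M[K]_n) :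
  A *m B = 1%:M -> invmx A = B.
Proof.
move=> AB1; have [uA _] := mulmx1_unit AB1.
by rewrite -[invmx A]mulmx1 -AB1 mulmxA mulVmx // mul1mx.
Qed.

Lemma congrmx_sym (K : comUnitRingType) n (P X H : 'M[K]_n) :
  P \in unitmx -> P^T *m X *m P = H -> H^T = H -> X^T = X.
Proof.
move=> uP XE Hsym; have uPT : P^T \in unitmx by rewrite unitmx_tr.
have -> : X = invmx P^T *m H *m invmx P by rewrite -XE !mulmxA mulVmx // mul1mx mulmxK.
by rewrite !trmx_mul !trmx_inv trmxK Hsym mulmxA.
Qed.

Lemma invmx_sandwich (K : comUnitRingType) n (X Y P Pb : 'M[K]_n) :
  P \in unitmx -> Y \in unitmx -> P^T *m X *m Pb = Y -> invmx X = Pb *m invmx Y *m P^T.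
Proof.
move=> uP uY XE; have uPT : P^T \in unitmx by rewrite unitmx_tr.
have XPb : X *m Pb = invmx P^T *m Y by rewrite -XE -!mulmxA mulKmx.
apply: mulmx1_invmx; rewrite !mulmxA XPb -[_ *m Y *m invmx Y]mulmxA mulmxV //.
by rewrite mulmx1 mulVmx.
Qed.

Lemma mobius_sym (K : comUnitRingType) n (P Q : 'M[K]_n) :
  P \in unitmx -> P^T *m Q = Q^T *m P -> (Q *m invmx P)^T = Q *m invmx P.
Proof.
move=> uP PQ; have uPT : P^T \in unitmx by rewrite unitmx_tr.
by rewrite trmx_mul trmx_inv -[Q^T](mulmxK uP) -PQ !mulmxA (mulVmx uPT) mul1mx.
Qed.

Lemma mobius_diff_transport (K : comUnitRingType) n (P Q Pb Qb : 'M[K]_n) :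
  P \in unitmx -> Pb \in unitmx -> Pb^T *m Qb = Qb^T *m Pb ->
  Pb^T *m (Q *m invmx P - Qb *m invmx Pb) *m P = Pb^T *m Q - Qb^T *m P.
Proof.
move=> uP uPb PQb; rewrite mulmxBr mulmxBl !mulmxA (mulmxKV uP) PQb.
by rewrite (mulmxK uPb).
Qed.

Lemma mobius_deriv_transport (K : comUnitRingType) n (a c P Q H : 'M[K]_n) :
  P \in unitmx -> P^T *m Q = Q^T *m P -> P^T *m a - Q^T *m c = 1%:M ->
  P^T *m (a *m H - Q *m invmx P *m (c *m H)) = H.
Proof.
move=> uP PQ PaQc.
by rewrite mulmxBr !mulmxA PQ (mulmxK uP) -mulmxBl PaQc mul1mx.
Qed.

Lemma mulmx_lineD (K : comPzRingType) p n (a b : 'M[K]_(p, n)) (Z H : 'M[K]_n) s :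
  a *m (Z + s *: H) + b = a *m Z + b + s *: (a *m H).
Proof. by rewrite mulmxDr -scalemxAr addrAC. Qed.

Lemma mulmx_lineD2 (K : comPzRingType) p n (W H l u : 'M[K]_(p, n)) (Z G : 'M[K]_n) s :
  W + s *: H + l *m (Z + s *: G) + u = W + l *m Z + u + s *: (H + l *m G).
Proof. by rewrite mulmxDr -scalemxAr scalerDr addrACA (addrAC (W + l *m Z)). Qed.

Lemma tr_complete_square (K : comPzRingType) n m (Yi H Hb : 'M[K]_n) (V O Ob : 'M[K]_(m, n)) :
  Yi^T = Yi -> H^T = H -> Hb^T = Hb ->
  \tr (Yi *m V^T *m V *m Yi *m H *m Yi *m Hb) + \tr (Yi *m O^T *m Ob)
  - \tr (V *m Yi *m H *m Yi *m Ob^T) - \tr (V *m Yi *m Hb *m Yi *m O^T)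
  = \tr (Yi *m (O - V *m Yi *m H)^T *m (Ob - V *m Yi *m Hb)).
Proof.
move=> Yisym Hsym Hbsym.
rewrite (raddfB (@trmx _ _ _)) /= !trmx_mul Yisym Hsym !mulmxBr !mulmxBl.
rewrite !(raddfB (@mxtrace _ _)) /= !mulmxA.
have -> : \tr (Yi *m O^T *m V *m Yi *m Hb) = \tr (V *m Yi *m Hb *m Yi *m O^T).
  by rewrite -[_ *m Hb]mulmxA -[_ *m (Yi *m Hb)]mulmxA mxtrace_mulC !mulmxA.
have -> : \tr (Yi *m H *m Yi *m V^T *m Ob) = \tr (V *m Yi *m H *m Yi *m Ob^T).
  rewrite -mxtrace_tr !trmx_mul trmxK Yisym Hsym.
  by rewrite -!mulmxA mxtrace_mulC !mulmxA.
have -> : \tr (Yi *m H *m Yi *m V^T *m V *m Yi *m Hb) =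
          \tr (Yi *m V^T *m V *m Yi *m H *m Yi *m Hb).
  rewrite -mxtrace_tr !trmx_mul !trmxK Yisym Hsym Hbsym.
  by rewrite -!mulmxA mxtrace_mulC !mulmxA.
ring.
Qed.

Lemma mxtrace_factor_sandwich (K : comPzRingType) n (Yi N M H Hb : 'M[K]_n) :
  Yi = N *m M -> \tr (Yi *m H *m Yi *m Hb) = \tr (M *m H *m N *m (M *m Hb *m N)).
Proof. by move->; rewrite -!mulmxA mxtrace_mulC !mulmxA. Qed.

Lemma mxtrace_factor_mul (K : comPzRingType) n m (Yi N M : 'M[K]_n)
    (X : 'M[K]_(n, m)) (Y : 'M[K]_(m, n)) :
  Yi = N *m M -> \tr (Yi *m X *m Y) = \tr (M *m X *m (Y *m N)).
Proof. by move->; rewrite -!mulmxA mxtrace_mulC !mulmxA. Qed.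

Lemma mxtrace_transport_sandwich (K : comPzRingType) n (Yi Yi' H H' Hb Hb' P Pb : 'M[K]_n) :
  Yi' = Pb *m Yi *m P^T -> Yi' = P *m Yi *m Pb^T ->
  P^T *m H' *m P = H -> Pb^T *m Hb' *m Pb = Hb ->
  \tr (Yi' *m H' *m Yi' *m Hb') = \tr (Yi *m H *m Yi *m Hb).
Proof.
move=> Yi'E1 Yi'E2 HE HbE; rewrite {1}Yi'E1 Yi'E2 -HE -HbE.
by rewrite -!mulmxA mxtrace_mulC !mulmxA.
Qed.

Lemma mxtrace_transport_mul (K : comPzRingType) n m (Yi Yi' P Pb : 'M[K]_n)
    (O O' Ob Ob' : 'M[K]_(m, n)) :
  Yi' = Pb *m Yi *m P^T -> O' *m P = O -> Ob' *m Pb = Ob ->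
  \tr (Yi' *m O'^T *m Ob') = \tr (Yi *m O^T *m Ob).
Proof.
move=> Yi'E OE ObE; rewrite Yi'E -OE -ObE trmx_mul.
by rewrite -!mulmxA mxtrace_mulC !mulmxA.
Qed.

Lemma in_Sp_blocks (R : realType) n (M : 'M[R]_(n + n)) : in_Sp M ->
  [/\ (ulsubmx M)^T *m dlsubmx M = (dlsubmx M)^T *m ulsubmx M,
      (ursubmx M)^T *m drsubmx M = (drsubmx M)^T *m ursubmx M &
      (ulsubmx M)^T *m drsubmx M - (dlsubmx M)^T *m ursubmx M = 1%:M].
Proof.
rewrite /in_Sp /Jmx -[in LHS](submxK M) tr_block_mx !mulmx_block.
rewrite !(mulmx0, mul0mx, mulmx1, mulmxN, mulNmx, addr0, add0r).
case/eq_block_mx=> ul ur _ dr; split.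
- by apply/eqP; rewrite -subr_eq0 addrC ul.
- by apply/eqP; rewrite -subr_eq0 addrC dr.
- by rewrite addrC ur.
Qed.

Section SymplecticCross.
Variables (K : comPzRingType) (n : nat) (a b c d : 'M[K]_n).
Hypotheses (ac : a^T *m c = c^T *m a) (bd : b^T *m d = d^T *m b)
  (ad_cb : a^T *m d - c^T *m b = 1%:M).

Let da_bc : d^T *m a - b^T *m c = 1%:M.
Proof. by rewrite -[1%:M]trmx1 -ad_cb (raddfB (@trmx _ n n)) /= !trmx_mul !trmxK. Qed.

Lemma sp_cross (Z1 Z2 : 'M[K]_n) : Z1^T = Z1 ->
  (c *m Z1 + d)^T *m (a *m Z2 + b) - (a *m Z1 + b)^T *m (c *m Z2 + d) = Z2 - Z1.
Proof.
move=> Z1sym; set Q2 := a *m Z2 + b; set P2 := c *m Z2 + d.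
rewrite !(raddfD (@trmx _ n n)) /= !trmx_mul Z1sym !mulmxDl -!mulmxA opprD addrACA -!mulmxBr.
have -> : c^T *m Q2 - a^T *m P2 = - 1%:M.
  by rewrite !mulmxDr !mulmxA ac opprD addrACA subrr add0r -ad_cb opprB.
have -> : d^T *m Q2 - b^T *m P2 = Z2.
  by rewrite !mulmxDr !mulmxA bd opprD addrACA subrr addr0 -mulmxBl da_bc mul1mx.
by rewrite mulmxN mulmx1 addrC.
Qed.

Lemma sp_cross_a (Z : 'M[K]_n) : Z^T = Z ->
  (c *m Z + d)^T *m a - (a *m Z + b)^T *m c = 1%:M.
Proof.
move=> Zsym; rewrite !(raddfD (@trmx _ n n)) /= !trmx_mul Zsym !mulmxDl -!mulmxA ac opprD.
by rewrite addrACA subrr add0r da_bc.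
Qed.

End SymplecticCross.

Section ComplexMatrices.
Variable R : realType.
Local Notation C := R[i].

Lemma cmxM p q r (A : 'M[R]_(p, q)) (B : 'M[R]_(q, r)) : cmx (A *m B) = cmx A *m cmx B.
Proof. exact: map_mxM. Qed.
Lemma cmxB p q (A B : 'M[R]_(p, q)) : cmx (A - B) = cmx A - cmx B.
Proof. exact: map_mxB. Qed.
Lemma cmx_tr p q (A : 'M[R]_(p, q)) : cmx A^T = (cmx A)^T.
Proof. exact/esym/map_trmx. Qed.
Lemma cmx1 p : cmx (1%:M : 'M[R]_p) = 1%:M.
Proof. exact: map_mx1. Qed.
Lemma cmx_inv p (A : 'M[R]_p) : cmx (invmx A) = invmx (cmx A).
Proof. exact: map_invmx. Qed.
Lemma cmx_unit p (A : 'M[R]_p) : (cmx A \in unitmx) = (A \in unitmx).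
Proof. exact: map_unitmx. Qed.

Lemma mxconjM p q r (A : 'M[C]_(p, q)) (B : 'M[C]_(q, r)) :
  mxconj (A *m B) = mxconj A *m mxconj B.
Proof. exact: map_mxM. Qed.
Lemma mxconjD p q (A B : 'M[C]_(p, q)) : mxconj (A + B) = mxconj A + mxconj B.
Proof. exact: map_mxD. Qed.
Lemma mxconjB p q (A B : 'M[C]_(p, q)) : mxconj (A - B) = mxconj A - mxconj B.
Proof. exact: map_mxB. Qed.
Lemma mxconj_tr p q (A : 'M[C]_(p, q)) : mxconj A^T = (mxconj A)^T.
Proof. exact/esym/map_trmx. Qed.
Lemma mxconj_inv p (A : 'M[C]_p) : mxconj (invmx A) = invmx (mxconj A).
Proof. exact: map_invmx. Qed.
Lemma mxconj_unit p (A : 'M[C]_p) : (mxconj A \in unitmx) = (A \in unitmx).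
Proof. exact: map_unitmx. Qed.
Lemma mxconj0 p q : mxconj (0 : 'M[C]_(p, q)) = 0.
Proof. exact: map_mx0. Qed.
Lemma mxconjK p q : involutive (mxconj : 'M[C]_(p, q) -> _).
Proof. by move=> A; apply/matrixP => i j; rewrite !mxE conjcK. Qed.
Lemma mxconj_cmx p q (A : 'M[R]_(p, q)) : mxconj (cmx A) = cmx A.
Proof. by apply/matrixP => i j; rewrite !mxE conjc_real. Qed.
Lemma Immx_tr p q (A : 'M[C]_(p, q)) : Immx A^T = (Immx A)^T.
Proof. by apply/matrixP => i j; rewrite !mxE. Qed.

Lemma i2_neq0 : i2 != 0 :> C.
Proof. by rewrite mulf_neq0 // eq_complex /= oner_eq0 andbF. Qed.

Lemma subr_mxconj p q (A : 'M[C]_(p, q)) : A - mxconj A = i2 *: cmx (Immx A).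
Proof. by apply/matrixP => i j; rewrite !mxE subcJ mulrAC. Qed.

End ComplexMatrices.

Section Positivity.
Variable R : realType.
Local Notation C := R[i].

Lemma posdef_row_gt0 n (Y : 'M[R]_n) (x : 'rV[R]_n) : posdef Y -> x != 0 ->
  0 < (x *m Y *m x^T) 0 0.
Proof. by case=> _ Ypos x0; have := Ypos x^T; rewrite trmxK trmx_eq0; apply. Qed.

Lemma posdef_row_ge0 n (Y : 'M[R]_n) (x : 'rV[R]_n) : posdef Y ->
  0 <= (x *m Y *m x^T) 0 0.
Proof.
move=> Ydef; have [->|x0] := eqVneq x 0; first by rewrite !mul0mx mxE.
exact/ltW/posdef_row_gt0.
Qed.

Lemma posdef_unit n (Y : 'M[R]_n) : posdef Y -> Y \in unitmx.
Proof.
case=> _ Ypos; rewrite unitmxE unitfE; apply/negP => /det0P[v v0 vY].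
have := Ypos v^T; rewrite trmx_eq0 => /(_ v0).
by rewrite trmxK vY mul0mx mxE ltxx.
Qed.

Lemma posdef_inv n (Y : 'M[R]_n) : posdef Y -> posdef (invmx Y).
Proof.
move=> Ydef; have uY := posdef_unit Ydef; case: Ydef => Ysym Ypos; split.
  by rewrite trmx_inv Ysym.
move=> x x0; have Yix0 : invmx Y *m x != 0.
  by apply: contra x0 => /eqP Yix0; rewrite -[x](mulKVmx uY) Yix0 mulmx0.
by have := Ypos _ Yix0; rewrite trmx_mul trmx_inv Ysym -!mulmxA (mulKVmx uY).
Qed.

Lemma Re_cquad n (Y : 'M[R]_n) (x : 'rV[C]_n) :
  complex.Re ((x *m cmx Y *m (mxconj x)^T) 0 0) =
  (Remx x *m Y *m (Remx x)^T) 0 0 + (Immx x *m Y *m (Immx x)^T) 0 0.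
Proof.
rewrite !mxE (raddf_sum (@complex.Re R)) -big_split; apply: eq_bigr => k _ /=.
rewrite !mxE !mulr_suml (raddf_sum (@complex.Re R)) -big_split.
apply: eq_bigr => j _ /=; rewrite !mxE.
by case: (x 0 j) => a1 b1; case: (x 0 k) => a2 b2 /=; ring.
Qed.

Lemma posdef_cquad_gt0 n (Y : 'M[R]_n) (x : 'rV[C]_n) : posdef Y -> x != 0 ->
  0 < complex.Re ((x *m cmx Y *m (mxconj x)^T) 0 0).
Proof.
move=> Ydef x0; rewrite Re_cquad.
have [Rex0|Rex0] := eqVneq (Remx x) 0.
  have Imx0 : Immx x != 0.
    apply: contra x0 => /eqP Imx0; apply/eqP/matrixP => i j.
    move/matrixP/(_ i j): Rex0; move/matrixP/(_ i j): Imx0.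
    by rewrite !mxE; case: (x i j) => ? ? /= -> ->.
  by rewrite Rex0 !mul0mx mxE add0r posdef_row_gt0.
by rewrite ltr_pwDl ?posdef_row_gt0 ?posdef_row_ge0.
Qed.

(* A nonzero [u] with [P u = 0] would give [u^H (i2 Y) u = 0], although it is [i2]
   times a positive real. *)
Lemma cross_unitmx n (Y : 'M[R]_n) (P Q : 'M[C]_n) : posdef Y ->
  (mxconj P)^T *m Q - (mxconj Q)^T *m P = i2 *: cmx Y -> P \in unitmx.
Proof.
move=> Ydef PQ; rewrite unitmxE unitfE -det_tr; apply/negP => /det0P[v v0 vP].
set r := mxconj v.
have rP : r *m (mxconj P)^T = 0 by rewrite -mxconj_tr -mxconjM vP mxconj0.
have Pr : P *m (mxconj r)^T = 0 by rewrite mxconjK -[P]trmxK -trmx_mul vP trmx0.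
have r0 : r != 0 by apply: contra v0 => /eqP r0; rewrite -[v]mxconjK -/r r0 mxconj0.
have := posdef_cquad_gt0 Ydef r0.
have : r *m ((mxconj P)^T *m Q - (mxconj Q)^T *m P) *m (mxconj r)^T = 0.
  by rewrite mulmxBr mulmxBl !mulmxA rP -!mulmxA Pr !mulmx0 mul0mx subrr.
rewrite PQ -scalemxAr -scalemxAl => /matrixP/(_ 0 0); rewrite !mxE => /eqP.
by rewrite mulf_eq0 (negbTE (i2_neq0 R)) => /eqP ->; rewrite ltxx.
Qed.

End Positivity.

Section HermitianSquares.
Variable R : realType.
Local Notation C := R[i].
Local Open Scope sesquilinear_scope.

Lemma posdef_factor n (Y : 'M[R]_n) : posdef Y ->
  exists2 M : 'M[C]_n, M \in unitmx & cmx Y = (mxconj M)^T *m M.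
Proof.
move=> Ydef; set Yc := cmx Y.
have Yherm : Yc \is hermsymmx.
  apply/is_hermitianmxP; rewrite expr0 scale1r -map_trmx.
  by case: Ydef => Ysym _; rewrite -[(Yc ^ _)%sesqui]/(mxconj Yc) mxconj_cmx -cmx_tr Ysym.
have /orthomx_spectralP YcE := hermitian_normalmx Yherm.
set U := spectralmx Yc in YcE; set d := spectral_diag Yc in YcE.
have Uunitary : U \is unitarymx by apply: spectral_unitarymx.
have uU := unitarymx_unit Uunitary.
have UUadj : U *m U^t* = 1%:M by apply/unitarymxP.
have d_gt0 i : 0 < complex.Re (d 0 i).
  have -> : d 0 i = (row i U *m Yc *m (mxconj (row i U))^T) 0 0.
    have -> : d 0 i = (U *m Yc *m U^t*) i i.
      by rewrite YcE !mulmxA (mulmxV uU) mul1mx -mulmxA UUadj mulmx1 mxE eqxx mulr1n.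
    rewrite !mxE; apply: eq_bigr => k _; rewrite !mxE; congr (_ * _).
    by apply: eq_bigr => j _; rewrite !mxE.
  apply: posdef_cquad_gt0 Ydef _; apply/negP => /eqP Ui0.
  have := congr1 (row i) UUadj; rewrite row_mul Ui0 mul0mx => /rowP/(_ i).
  by rewrite !mxE eqxx => /eqP; rewrite eq_sym oner_eq0.
have d_real i : d 0 i = (complex.Re (d 0 i))%:C%C.
  have /mxOverP/(_ 0 i) := hermitian_spectral_diag_real Yherm.
  by case: (d 0 i) => a b; rewrite complex_real /= => /eqP ->.
set s := \row_i ((Num.sqrt (complex.Re (d 0 i)))%:C%C : C).
exists (diag_mx s *m U).
  rewrite unitmx_mul uU andbT unitmxE unitfE det_diag prodf_seq_neq0.
  apply/allP => i _ /=; rewrite mxE eq_complex /= negb_and sqrtr_eq0 -ltNge.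
  by rewrite d_gt0.
rewrite mxconjM trmx_mul map_trmx -invmx_unitary // YcE !mulmxA.
congr (_ *m _); rewrite -mulmxA; congr (_ *m _).
rewrite /Defs.conjmx map_diag_mx tr_diag_mx mulmx_diag; congr diag_mx; apply/rowP => i.
rewrite !mxE; set r := Num.sqrt _.
rewrite [X in _ = X * _](_ : _ = r%:C%C); last by apply/eqP; rewrite eq_complex /= oppr0 !eqxx.
by rewrite -rmorphM /= -expr2 sqr_sqrtr ?ltW // -d_real.
Qed.

Lemma Re_tr_mxconj p q (K : 'M[C]_(p, q)) :
  complex.Re (\tr (K *m (mxconj K)^T)) =
  \sum_i \sum_j (complex.Re (K i j) ^+ 2 + complex.Im (K i j) ^+ 2).
Proof.
rewrite (raddf_sum (@complex.Re R)); apply: eq_bigr => i _.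
rewrite !mxE (raddf_sum (@complex.Re R)); apply: eq_bigr => j _.
by rewrite !mxE; case: (K i j) => a b /=; ring.
Qed.

Lemma Im_tr_mxconj p q (K : 'M[C]_(p, q)) : complex.Im (\tr (K *m (mxconj K)^T)) = 0.
Proof.
rewrite (raddf_sum (@complex.Im R)) big1 // => i _.
rewrite !mxE (raddf_sum (@complex.Im R)) big1 // => j _.
by rewrite !mxE; case: (K i j) => a b /=; ring.
Qed.

Lemma Re_tr_mxconj_ge0 p q (K : 'M[C]_(p, q)) :
  0 <= complex.Re (\tr (K *m (mxconj K)^T)).
Proof.
rewrite Re_tr_mxconj sumr_ge0 // => i _.
by rewrite sumr_ge0 // => j _; rewrite addr_ge0 ?sqr_ge0.
Qed.

Lemma Re_tr_mxconj_gt0 p q (K : 'M[C]_(p, q)) : K != 0 ->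
  0 < complex.Re (\tr (K *m (mxconj K)^T)).
Proof.
move=> K0; rewrite lt_def Re_tr_mxconj_ge0 andbT; apply: contra K0.
have sq_ge0 i j : 0 <= complex.Re (K i j) ^+ 2 + complex.Im (K i j) ^+ 2.
  by rewrite addr_ge0 ?sqr_ge0.
rewrite Re_tr_mxconj psumr_eq0 => [/allP K0|i _]; last exact: sumr_ge0.
apply/eqP/matrixP => i j; have /implyP/(_ isT) := K0 i (mem_index_enum i).
rewrite psumr_eq0 // => /allP/(_ j (mem_index_enum j))/implyP/(_ isT).
rewrite paddr_eq0 ?sqr_ge0 // !sqrf_eq0 mxE => /andP[/eqP Kre /eqP Kim].
by apply/eqP; rewrite eq_complex Kre Kim /= !eqxx.
Qed.

End HermitianSquares.

Section SjForm.
Variable R : realType.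
Local Notation C := R[i].

(* [ds2] with the square completed, [Yi] standing for [Y^-1] and [O] for
   [dW - V Y^-1 dZ]; see [ds2E]. *)
Definition sj_form (A B : R) n m (Yi H : 'M[C]_n) (O : 'M[C]_(m, n)) : C :=
  A%:C%C * \tr (Yi *m H *m Yi *m mxconj H) + B%:C%C * \tr (Yi *m O^T *m mxconj O).

Lemma ds2E n m (A B : R) (Z : 'M[C]_n) (W : 'M[C]_(m, n)) dZ dW :
  Z^T = Z -> dZ^T = dZ ->
  ds2 A B Z W dZ dW = sj_form A B (invmx (cmx (Immx Z))) dZ
    (dW - cmx (Immx W) *m invmx (cmx (Immx Z)) *m dZ).
Proof.
move=> Zsym dZsym; have Yisym : (invmx (cmx (Immx Z)))^T = invmx (cmx (Immx Z)).
  by rewrite trmx_inv -cmx_tr -Immx_tr Zsym.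
rewrite /ds2 /sj_form; congr (_ + _ * _).
have dZbsym : (mxconj dZ)^T = mxconj dZ by rewrite -mxconj_tr dZsym.
rewrite (tr_complete_square (cmx (Immx W)) dW (mxconj dW) Yisym dZsym dZbsym).
by rewrite mxconjB !mxconjM mxconj_inv !mxconj_cmx.
Qed.

Lemma sj_form_tr_mxconj n m (A B : R) (Y : 'M[R]_n) (H : 'M[C]_n) (O : 'M[C]_(m, n)) :
  posdef Y -> H^T = H ->
  exists2 M : 'M[C]_n, M \in unitmx & sj_form A B (invmx (cmx Y)) H O =
    A%:C%C * \tr (M *m H *m (mxconj M)^T *m (mxconj (M *m H *m (mxconj M)^T))^T)
    + B%:C%C * \tr (M *m O^T *m (mxconj (M *m O^T))^T).
Proof.
move=> Ydef Hsym; have [M uM YiE] := posdef_factor (posdef_inv Ydef).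
exists M; first exact: uM.
rewrite cmx_inv in YiE; rewrite /sj_form (mxtrace_factor_sandwich H (mxconj H) YiE).
rewrite (mxtrace_factor_mul O^T (mxconj O) YiE).
have -> : (mxconj (M *m H *m (mxconj M)^T))^T = M *m mxconj H *m (mxconj M)^T.
  by rewrite !mxconjM !trmx_mul mxconj_tr mxconjK trmxK -[(mxconj H)^T]mxconj_tr Hsym mulmxA.
have -> : (mxconj (M *m O^T))^T = mxconj O *m (mxconj M)^T.
  by rewrite mxconjM trmx_mul mxconj_tr trmxK.
by [].
Qed.

Lemma sj_form_transport (A B : R) n m (Yi Yi' H H' P : 'M[C]_n) (O O' : 'M[C]_(m, n)) :
  Yi' = mxconj P *m Yi *m P^T -> Yi' = P *m Yi *m (mxconj P)^T ->
  P^T *m H' *m P = H -> O' *m P = O ->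
  sj_form A B Yi' H' O' = sj_form A B Yi H O.
Proof.
move=> Yi'E1 Yi'E2 HE OE.
have HbE : (mxconj P)^T *m mxconj H' *m mxconj P = mxconj H by rewrite -HE !mxconjM mxconj_tr.
have ObE : mxconj O' *m mxconj P = mxconj O by rewrite -OE mxconjM.
rewrite /sj_form (mxtrace_transport_sandwich Yi'E1 Yi'E2 HE HbE).
by rewrite (mxtrace_transport_mul Yi'E1 OE ObE).
Qed.

Lemma Re_real_comb (a b : R) (x y : C) :
  complex.Re (a%:C%C * x + b%:C%C * y) = a * complex.Re x + b * complex.Re y.
Proof. by case: x => ? ?; case: y => ? ? /=; ring. Qed.
Lemma Im_real_comb (a b : R) (x y : C) :
  complex.Im (a%:C%C * x + b%:C%C * y) = a * complex.Im x + b * complex.Im y.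
Proof. by case: x => ? ?; case: y => ? ? /=; ring. Qed.

Lemma riemannian_ds2 n m (A B : R) : 0 < A -> 0 < B -> is_riemannian_metric (@ds2 R n m A B).
Proof.
move=> A_gt0 B_gt0 Z W [Zsym Ydef] dZ dW dZsym.
rewrite (ds2E A B W dW Zsym dZsym); set O := dW - _.
have [M uM ->] := sj_form_tr_mxconj A B O Ydef dZsym.
split; first by rewrite Im_real_comb !Im_tr_mxconj !mulr0 addr0.
move=> dZW0; rewrite Re_real_comb.
have [dZ0 | dZ0] := eqVneq dZ 0.
  have O0 : M *m O^T != 0.
    have dW0 : dW != 0 by move: dZW0; rewrite dZ0 xpair_eqE eqxx.
    apply: contra dW0; rewrite /O dZ0 mulmx0 subr0 => /eqP MdW0.
    by rewrite -trmx_eq0 -(mulKmx uM dW^T) MdW0 mulmx0.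
  rewrite ltr_wpDl ?mulr_gt0 ?Re_tr_mxconj_gt0 //.
  by rewrite mulr_ge0 ?Re_tr_mxconj_ge0 ?ltW.
have K0 : M *m dZ *m (mxconj M)^T != 0.
  have uN : (mxconj M)^T \in unitmx by rewrite unitmx_tr mxconj_unit.
  apply: contra dZ0 => /eqP MdZN0.
  by rewrite -(mulKmx uM dZ) -(mulmxK uN (M *m dZ)) MdZN0 mul0mx mulmx0.
rewrite ltr_wpDr ?mulr_gt0 ?Re_tr_mxconj_gt0 //.
by rewrite mulr_ge0 ?Re_tr_mxconj_ge0 ?ltW.
Qed.

End SjForm.

Section Limits.
Variable R : realType.
Local Notation C := R[i].
Local Open Scope classical_set_scope.

Lemma cvg0C_cst (c : C) : cvg0C (fun=> c) c.
Proof. by split; apply: cvg_cst. Qed.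

Lemma cvg0C_id : cvg0C (fun t : R => t%:C%C) 0.
Proof. by split; [exact: nbhs_dnbhs | exact: cvg_cst]. Qed.

Lemma cvg0C_add (f g : R -> C) a b : cvg0C f a -> cvg0C g b ->
  cvg0C (fun t => f t + g t) (a + b).
Proof.
case=> fRe fIm [gRe gIm]; split; rewrite raddfD.
  have -> : (fun t => complex.Re (f t + g t)) = (fun t => complex.Re (f t) + complex.Re (g t)).
    by apply/funext => t; rewrite raddfD.
  exact: cvgD.
have -> : (fun t => complex.Im (f t + g t)) = (fun t => complex.Im (f t) + complex.Im (g t)).
  by apply/funext => t; rewrite raddfD.
exact: cvgD.
Qed.

Lemma Re_mul (x y : C) :
  complex.Re (x * y) = complex.Re x * complex.Re y - complex.Im x * complex.Im y.
Proof. by case: x; case: y. Qed.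

Lemma Im_mul (x y : C) :
  complex.Im (x * y) = complex.Re x * complex.Im y + complex.Im x * complex.Re y.
Proof. by case: x => a b; case: y => c d /=; rewrite addrC. Qed.

Lemma cvg0C_mul (f g : R -> C) a b : cvg0C f a -> cvg0C g b ->
  cvg0C (fun t => f t * g t) (a * b).
Proof.
case: a b => [a1 a2] [b1 b2] [/= fRe fIm] [/= gRe gIm]; split => /=.
  have -> : (fun t => complex.Re (f t * g t)) =
      (fun t => complex.Re (f t)) \* (fun t => complex.Re (g t)) -
      (fun t => complex.Im (f t)) \* (fun t => complex.Im (g t)).
    by apply/funext => t; rewrite Re_mul.
  by apply: cvgB; apply: cvgM.
have -> : (fun t => complex.Im (f t * g t)) =
    (fun t => complex.Re (f t)) \* (fun t => complex.Im (g t)) +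
    (fun t => complex.Im (f t)) \* (fun t => complex.Re (g t)).
  by apply/funext => t; rewrite Im_mul.
by apply: cvgD; apply: cvgM.
Qed.

Lemma cvg0C_sum (I : Type) (r : seq I) (F : I -> R -> C) (L : I -> C) :
  (forall i, cvg0C (F i) (L i)) ->
  cvg0C (fun t => \sum_(i <- r) F i t) (\sum_(i <- r) L i).
Proof.
move=> FL; elim: r => [|x r IHr].
  by under eq_fun do rewrite big_nil; rewrite big_nil; apply: cvg0C_cst.
by under eq_fun do rewrite big_cons; rewrite big_cons; apply: cvg0C_add.
Qed.

Lemma cvg0C_prod (I : Type) (r : seq I) (F : I -> R -> C) (L : I -> C) :
  (forall i, cvg0C (F i) (L i)) ->
  cvg0C (fun t => \prod_(i <- r) F i t) (\prod_(i <- r) L i).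
Proof.
move=> FL; elim: r => [|x r IHr].
  by under eq_fun do rewrite big_nil; rewrite big_nil; apply: cvg0C_cst.
by under eq_fun do rewrite big_cons; rewrite big_cons; apply: cvg0C_mul.
Qed.

Lemma cvg0C_near (f g : R -> C) l : (\forall t \near (0 : R)^', f t = g t) ->
  cvg0C f l -> cvg0C g l.
Proof.
move=> fg [fRe fIm]; split.
  by apply: cvg_trans fRe; apply: near_eq_cvg; apply: filterS fg => t /= ->.
by apply: cvg_trans fIm; apply: near_eq_cvg; apply: filterS fg => t /= ->.
Qed.

Lemma cvg0C_uniq (f : R -> C) l1 l2 : cvg0C f l1 -> cvg0C f l2 -> l1 = l2.
Proof.
case: l1 l2 => [a1 b1] [a2 b2] [/= Re1 Im1] [/= Re2 Im2].
by congr Complex; [exact: (cvg_unique _ Re1 Re2) | exact: (cvg_unique _ Im1 Im2)].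
Qed.

Lemma cvg0C_neq0 (f : R -> C) l : cvg0C f l -> l != 0 ->
  \forall t \near (0 : R)^', f t != 0.
Proof.
case: l => a b [/= fRe fIm]; rewrite eq_complex negb_and /= => /orP[a0 | b0].
  by apply: filterS (cvgr_neq0 _ fRe a0) => t; apply: contra => /eqP ->.
by apply: filterS (cvgr_neq0 _ fIm b0) => t; apply: contra => /eqP ->.
Qed.

End Limits.

Section MatrixDerivative.
Variable R : realType.
Local Notation C := R[i].
Local Open Scope classical_set_scope.

Definition mx_cvg0 p q (F : R -> 'M[C]_(p, q)) (L : 'M[C]_(p, q)) :=
  forall i j, cvg0C (fun t => F t i j) (L i j).

Lemma mx_cvg0_mul p q r (F : R -> 'M[C]_(p, q)) (G : R -> 'M[C]_(q, r)) L1 L2 :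
  mx_cvg0 F L1 -> mx_cvg0 G L2 -> mx_cvg0 (fun t => F t *m G t) (L1 *m L2).
Proof.
move=> FL1 GL2 i j; under eq_fun do rewrite mxE.
by rewrite mxE; apply: cvg0C_sum => k; apply: cvg0C_mul.
Qed.

Lemma det_cvg0 n (F : R -> 'M[C]_n) L : mx_cvg0 F L ->
  cvg0C (fun t => \det (F t)) (\det L).
Proof.
move=> FL; apply: cvg0C_sum => s; apply: cvg0C_mul; first exact: cvg0C_cst.
by apply: cvg0C_prod => i; apply: FL.
Qed.

Lemma mx_cvg0_affine p q (P K : 'M[C]_(p, q)) : mx_cvg0 (fun t => P + t%:C%C *: K) P.
Proof.
move=> i j; have := cvg0C_add (cvg0C_cst (P i j)) (cvg0C_mul (cvg0C_id R) (cvg0C_cst (K i j))).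
by rewrite mul0r addr0; congr cvg0C; apply/funext => t; rewrite !mxE.
Qed.

Lemma unitmx_affine_near n (P K : 'M[C]_n) : P \in unitmx ->
  \forall t \near (0 : R)^', P + t%:C%C *: K \in unitmx.
Proof.
rewrite unitmxE unitfE => detP0; have := cvg0C_neq0 (det_cvg0 (mx_cvg0_affine P K)) detP0.
by apply: filterS => t; rewrite unitmxE unitfE.
Qed.

(* For small [t <> 0], the difference quotient of [F] times [P + t K] is exactly
   [X' - X P^-1 K]; let [t] tend to [0]. *)
Lemma mx_deriv0_mobius p n (X X' : 'M[C]_(p, n)) (P K : 'M[C]_n) (F : R -> 'M[C]_(p, n)) D :
  P \in unitmx ->
  (forall t, F t = (X + t%:C%C *: X') *m invmx (P + t%:C%C *: K)) ->
  mx_deriv0 F D -> D *m P = X' - X *m invmx P *m K.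
Proof.
move=> uP FE dF.
pose Q t := \matrix_(i, j) ((F t i j - F 0 i j) / t%:C%C).
have QD : mx_cvg0 Q D by move=> i j; under eq_fun do rewrite mxE; exact: dF.
have F0 : F 0 = X *m invmx P by rewrite FE !scale0r !addr0.
have QP : \forall t \near (0 : R)^', Q t *m (P + t%:C%C *: K) = X' - X *m invmx P *m K.
  near=> t.
  have tC0 : t%:C%C != 0 :> C.
    by rewrite eq_complex /= negb_and eqxx orbF; near: t; exact: nbhs_dnbhs_neq.
  have uPt : P + t%:C%C *: K \in unitmx by near: t; exact: unitmx_affine_near.
  have -> : Q t = (t%:C%C)^-1 *: (F t - F 0) by apply/matrixP => i j; rewrite !mxE mulrC.
  rewrite -scalemxAl mulmxBl {1}FE (mulmxKV uPt) F0 mulmxDr (mulmxKV uP) -scalemxAr.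
  by rewrite opprD addrACA subrr add0r -scalerBr scalerA mulVf // scale1r.
apply/matrixP => i j; apply: (cvg0C_uniq (mx_cvg0_mul QD (mx_cvg0_affine P K) i j)).
by apply: cvg0C_near (cvg0C_cst _); apply: filterS QP => t ->.
Unshelve. all: end_near.
Qed.

End MatrixDerivative.

Section JacobiAction.
Variables (R : realType) (n : nat) (M : 'M[R]_(n + n)) (Z : 'M[R[i]]_n).
Hypotheses (SpM : in_Sp M) (Zsym : Z^T = Z) (Ydef : posdef (Immx Z)).
Local Notation C := R[i].
Local Notation a := (cmx (ulsubmx M)).
Local Notation b := (cmx (ursubmx M)).
Local Notation c := (cmx (dlsubmx M)).
Local Notation d := (cmx (drsubmx M)).
Local Notation P := (c *m Z + d).
Local Notation Q := (a *m Z + b).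
Local Notation Y := (cmx (Immx Z)).
Local Notation Zs := (actZ M Z).

Let sp_ac : a^T *m c = c^T *m a.
Proof. by have [ac _ _] := in_Sp_blocks SpM; rewrite -!cmx_tr -!cmxM ac. Qed.
Let sp_bd : b^T *m d = d^T *m b.
Proof. by have [_ bd _] := in_Sp_blocks SpM; rewrite -!cmx_tr -!cmxM bd. Qed.
Let sp_ad_cb : a^T *m d - c^T *m b = 1%:M.
Proof. by have [_ _ ad_cb] := in_Sp_blocks SpM; rewrite -!cmx_tr -!cmxM -cmxB ad_cb cmx1. Qed.

Let mxconjP : mxconj P = c *m mxconj Z + d.
Proof. by rewrite mxconjD mxconjM !mxconj_cmx. Qed.
Let mxconjQ : mxconj Q = a *m mxconj Z + b.
Proof. by rewrite mxconjD mxconjM !mxconj_cmx. Qed.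

Lemma jacobi_cross : P^T *m Q = Q^T *m P.
Proof. by apply/eqP; rewrite -subr_eq0 sp_cross // subrr. Qed.

Lemma jacobi_cross_conj : (mxconj P)^T *m Q - (mxconj Q)^T *m P = i2 *: Y.
Proof. by rewrite mxconjP mxconjQ sp_cross ?subr_mxconj // -mxconj_tr Zsym. Qed.

Lemma jacobi_denom_unit : P \in unitmx.
Proof. exact: cross_unitmx Ydef jacobi_cross_conj. Qed.

Let uP := jacobi_denom_unit.
Let uPb : mxconj P \in unitmx. Proof. by rewrite mxconj_unit. Qed.

Lemma actZ_sym : Zs^T = Zs.
Proof. exact: mobius_sym uP jacobi_cross. Qed.

Lemma Im_actZ : (mxconj P)^T *m cmx (Immx Zs) *m P = Y.
Proof.
have PQb : (mxconj P)^T *m mxconj Q = (mxconj Q)^T *m mxconj P.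
  by rewrite -!mxconj_tr -!mxconjM jacobi_cross.
apply: (scalerI (i2_neq0 R)); rewrite scalemxAl scalemxAr -subr_mxconj.
by rewrite /actZ mxconjM mxconj_inv (mobius_diff_transport Q uP uPb PQb) jacobi_cross_conj.
Qed.

Let Im_actZ_conj : P^T *m cmx (Immx Zs) *m mxconj P = Y.
Proof. by have := congr1 mxconj Im_actZ; rewrite !mxconjM mxconj_tr mxconjK !mxconj_cmx. Qed.

Let uY : Y \in unitmx. Proof. by rewrite cmx_unit posdef_unit. Qed.

Lemma Im_actZ_inv : invmx (cmx (Immx Zs)) = mxconj P *m invmx Y *m P^T.
Proof. exact: invmx_sandwich uP uY Im_actZ_conj. Qed.

Lemma Im_actZ_inv_conj : invmx (cmx (Immx Zs)) = P *m invmx Y *m (mxconj P)^T.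
Proof. exact: invmx_sandwich uPb uY Im_actZ. Qed.

Lemma actZ_deriv dZ dZ' : mx_deriv0 (fun t : R => actZ M (Z + t%:C%C *: dZ)) dZ' ->
  P^T *m dZ' *m P = dZ.
Proof.
move=> dZ'E; have dZ'P : dZ' *m P = a *m dZ - Q *m invmx P *m (c *m dZ).
  apply: (mx_deriv0_mobius uP _ dZ'E) => t.
  by rewrite /actZ (mulmx_lineD a) (mulmx_lineD c).
rewrite -mulmxA dZ'P.
exact: mobius_deriv_transport uP jacobi_cross (sp_cross_a sp_ac sp_ad_cb Zsym).
Qed.

Variables (m : nat) (la mu : 'M[R]_(m, n)) (W : 'M[C]_(m, n)).
Local Notation W1 := (W + cmx la *m Z + cmx mu).
Local Notation Ws := (actW M la mu Z W).
Local Notation V := (cmx (Immx W)).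

Lemma Im_actW : cmx (Immx Ws) *m mxconj P = V + cmx la *m Y - Ws *m c *m Y.
Proof.
have W1E : W1 - mxconj W1 = i2 *: (V + cmx la *m Y).
  rewrite scalerDr scalemxAr -!subr_mxconj mulmxBr !mxconjD mxconjM !mxconj_cmx.
  by rewrite opprD addrACA subrr addr0 opprD addrACA.
have PbE : mxconj P = P - i2 *: (c *m Y).
  have PPb : P - mxconj P = i2 *: (c *m Y).
    by rewrite mxconjP [c *m mxconj Z + d]addrC (addrKA d) -mulmxBr subr_mxconj scalemxAr.
  by rewrite -PPb subKr.
apply: (scalerI (i2_neq0 R)).
rewrite scalemxAl -subr_mxconj mulmxBl {2}/actW mxconjM mxconj_inv (mulmxKV uPb).
rewrite {1}PbE mulmxBr /actW (mulmxKV uP).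
by rewrite scalerBr -W1E -scalemxAr mulmxA addrAC.
Qed.

Lemma actW_deriv dZ dW dZ' dW' :
  mx_deriv0 (fun t : R => actZ M (Z + t%:C%C *: dZ)) dZ' ->
  mx_deriv0 (fun t : R => actW M la mu (Z + t%:C%C *: dZ) (W + t%:C%C *: dW)) dW' ->
  (dW' - cmx (Immx Ws) *m invmx (cmx (Immx Zs)) *m dZ') *m P = dW - V *m invmx Y *m dZ.
Proof.
move=> dZ'E dW'E.
have dW'P : dW' *m P = dW + cmx la *m dZ - Ws *m (c *m dZ).
  apply: (mx_deriv0_mobius uP _ dW'E) => t.
  by rewrite /actW (mulmx_lineD c) mulmx_lineD2.
have VsE : cmx (Immx Ws) *m invmx (cmx (Immx Zs)) *m dZ' *m P =
    cmx (Immx Ws) *m mxconj P *m invmx Y *m (P^T *m dZ' *m P).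
  by rewrite Im_actZ_inv !mulmxA.
rewrite mulmxBl dW'P VsE Im_actW (actZ_deriv dZ'E) !mulmxBl !mulmxDl.
rewrite -!mulmxA !(mulKVmx uY) -[dW + _ - _]addrA -[V *m _ + _ - _]addrA.
by rewrite (addrC (V *m _)) addrKA.
Qed.

End JacobiAction.

Lemma ds2_invariant (R : realType) n m (A B : R) : GJ_invariant (@ds2 R n m A B).
Proof.
move=> M la mu ka [SpM _] Z W [Zsym Ydef] dZ dW dZsym dZ' dW' dZ'E dW'E.
have dZ'E' := actZ_deriv SpM Zsym Ydef dZ'E.
have dZ'sym := congrmx_sym (jacobi_denom_unit SpM Zsym Ydef) dZ'E' dZsym.
rewrite (ds2E A B W dW Zsym dZsym) (ds2E A B _ dW' (actZ_sym SpM Zsym Ydef) dZ'sym).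
exact (sj_form_transport A B (Im_actZ_inv SpM Zsym Ydef) (Im_actZ_inv_conj SpM Zsym Ydef)
  dZ'E' (actW_deriv SpM Zsym Ydef dZ'E dW'E)).
Qed.

Theorem theorem1p1 (R : realType) (n m : nat) (A B : R) :
  (0 < n)%N -> (0 < m)%N -> 0 < A -> 0 < B ->
  is_riemannian_metric (@ds2 R n m A B) /\ GJ_invariant (@ds2 R n m A B).
Proof.
move=> _ _ A_gt0 B_gt0; split; first exact: riemannian_ds2.
exact: ds2_invariant.
Qed.
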